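(* For every $j\ge0$, $$\left|\frac{\mathbb E(W_j)}{K}-\mathbb Q_j\right|\le \mathbb E\!\left(\min(pv_1,1)\,\frac{v_1}{V}\right).$$
   Context: Uniform urn model. Let $v$ be a random variable with values in the positive integers (number of balls of a given color), let $K\ge 1$, let $v_1,\dots,v_K$ be i.i.d. copies of $v$ and $V=v_1+\dots+v_K$. Fix a sampling fraction $p\in(0,1)$, with $pV$ assumed to be an integer. Conditionally on $\mathcal F=\{v_1,\dots,v_K\}$, $pV$ balls are drawn with replacement, independently, each drawn ball having color $i$ with probability $v_i/V$. Let $\tilde v_i$ be the number of drawn balls of color $i$, and for $j\ge0$ let $W_j=\sum_{i=1}^K\mathbf 1\{\tilde v_i=j\}$. Let $\mathbb Q_j=\mathbb E\big(\frac{(pv)^j}{j!}e^{-pv}\big)$, $j\ge0$. *)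

From Stdlib Require Import Reals Lra Lia List Arith ClassicalEpsilon.
Import ListNotations.
Open Scope R_scope.

(* Sum of a real series (the value l with infinite_sum u l, chosen classically).
   For the (bounded, nonnegative-weighted) series used below this is the usual sum. *)
Definition Series (u : nat -> R) : R :=
  epsilon (inhabits 0%R) (fun l => infinite_sum u l).

(* Law of v: q n = P(v = n). *)
Definition is_pos_int_law (q : nat -> R) : Prop :=
  (forall n, 0 <= q n) /\ q 0%nat = 0 /\ infinite_sum q 1.

(* Expectation of f(v_1,...,v_K) for i.i.d. v_i with law q
   (iterated sums over the product law). The list l = [v_1; ...; v_K]. *)
Fixpoint Eiid (q : nat -> R) (K : nat) (f : list nat -> R) : R :=
  match K with
  | O => f []
  | S k => Series (fun n => q n * Eiid q k (fun l => f (n :: l)))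
  end.

Fixpoint draws (K N : nat) : list (list nat) :=
  match N with
  | O => [[]]
  | S n => flat_map (fun s => map (fun c => c :: s) (seq 0 K)) (draws K n)
  end.

(* Probability of a given draw sequence, given F = l (colour i has v_{i+1} = nth i l 0 balls). *)
Definition draw_prob (l : list nat) (s : list nat) : R :=
  fold_right (fun c acc => (INR (nth c l 0%nat) / INR (list_sum l)) * acc) 1 s.

Definition tcount (s : list nat) (i : nat) : nat :=
  length (filter (Nat.eqb i) s).

Definition W (K : nat) (j : nat) (s : list nat) : nat :=
  length (filter (fun i => Nat.eqb (tcount s i) j) (seq 0 K)).

(* Number of draws pV (pV is assumed integer; Int_part recovers it). *)
Definition ndraws (p : R) (l : list nat) : nat :=
  Z.to_nat (Int_part (p * INR (list_sum l))).

(* E(W_j | F) for F = l. *)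
Definition EW_cond (p : R) (j : nat) (l : list nat) : R :=
  fold_right Rplus 0
    (map (fun s => draw_prob l s * INR (W (length l) j s))
         (draws (length l) (ndraws p l))).

Definition Qj (q : nat -> R) (p : R) (j : nat) : R :=
  Series (fun n => q n * ((p * INR n) ^ j / INR (fact j) * exp (- (p * INR n)))).

Definition rhs_integrand (p : R) (l : list nat) : R :=
  Rmin (p * INR (nth 0 l 0%nat)) 1 * (INR (nth 0 l 0%nat) / INR (list_sum l)).

From Stdlib Require Import Reals List Lra Lia ZArith ClassicalEpsilon FunctionalExtensionality.
Import ListNotations.
Open Scope R_scope.

(* Given F = (v_1,...,v_K), each colour count tilde v_i is Binomial(pV, v_i/V), so
   E(W_j | F) = Σ_i P(Bin(pV, v_i/V) = j).  The Stein–Chen method gives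
   |P(Bin(N,π) = j) - P(Poi(Nπ) = j)| ≤ (1 - e^{-Nπ}) π ≤ min(Nπ, 1) π, and here
   Nπ = p v_i.  Integrating over the i.i.d. v's, the i-th colour contributes an
   error at most E(min(pv_i,1) v_i/V), which by exchangeability equals
   E(min(pv_1,1) v_1/V); averaging over the K colours gives the theorem. *)

Lemma Rabs_le_bounds x c : Rabs x <= c -> -c <= x <= c.
Proof. unfold Rabs; destruct (Rcase_abs x); lra. Qed.

Fixpoint ssum (f : nat -> R) (n : nat) : R :=
  match n with O => 0 | S n' => ssum f n' + f n' end.

Lemma ssum_ext f g n : (forall i, (i < n)%nat -> f i = g i) -> ssum f n = ssum g n.
Proof. induction n; intro H; simpl; auto. rewrite IHn, H; auto. Qed.

Lemma ssum_plus f g n : ssum (fun i => f i + g i) n = ssum f n + ssum g n.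
Proof. induction n; simpl; [lra|rewrite IHn; lra]. Qed.

Lemma ssum_scal f c n : ssum (fun i => c * f i) n = c * ssum f n.
Proof. induction n; simpl; [lra|rewrite IHn; lra]. Qed.

Lemma ssum_const c n : ssum (fun _ => c) n = INR n * c.
Proof. induction n; simpl ssum; [simpl; lra|rewrite IHn, S_INR; lra]. Qed.

Lemma ssum_shift f n : ssum f (S n) = f 0%nat + ssum (fun i => f (S i)) n.
Proof. induction n; simpl ssum in *; [lra|rewrite IHn; lra]. Qed.

Lemma ssum_abs f n : Rabs (ssum f n) <= ssum (fun i => Rabs (f i)) n.
Proof.
  induction n; simpl; [rewrite Rabs_R0; lra|].
  eapply Rle_trans; [apply Rabs_triang|lra].
Qed.

Lemma ssum_le f g n : (forall i, (i < n)%nat -> f i <= g i) -> ssum f n <= ssum g n.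
Proof.
  induction n; intro H; simpl; [lra|].
  assert (f n <= g n) by (apply H; lia).
  assert (ssum f n <= ssum g n) by (apply IHn; intros; apply H; lia). lra.
Qed.

Lemma average_dev_bound (a : nat -> R) c b K : (0 < K)%nat ->
  (forall i, (i < K)%nat -> Rabs (a i - c) <= b) -> Rabs (ssum a K / INR K - c) <= b.
Proof.
  intros HK H. assert (HKr : 0 < INR K) by (apply lt_0_INR; lia).
  replace (ssum a K / INR K - c) with (ssum (fun i => a i - c) K / INR K).
  2: { rewrite (ssum_ext _ (fun i => a i + (-1) * c)) by (intros; ring).
       rewrite ssum_plus, ssum_const. field. lra. }
  unfold Rdiv. rewrite Rabs_mult, (Rabs_right (/ INR K)) by (left; now apply Rinv_0_lt_compat).
  apply Rmult_le_reg_r with (INR K); [exact HKr|].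
  rewrite Rmult_assoc, Rinv_l, Rmult_1_r by lra.
  eapply Rle_trans; [apply ssum_abs|].
  rewrite Rmult_comm, <- ssum_const. apply ssum_le. exact H.
Qed.

Lemma ssum_if f g i n : (i < n)%nat ->
  ssum (fun c => if Nat.eqb i c then f c else g c) n = ssum g n - g i + f i.
Proof.
  induction n; intro H; [lia|]. simpl.
  destruct (Nat.eq_dec i n) as [->|Hne].
  - rewrite Nat.eqb_refl, (ssum_ext _ g); [lra|].
    intros k Hk. destruct (Nat.eqb_spec n k); [lia|auto].
  - rewrite IHn by lia. destruct (Nat.eqb_spec i n); [lia|lra].
Qed.

Definition indb (b : bool) : R := if b then 1 else 0.

Lemma ssum_indicator_gen (a : nat -> R) j M :
  ssum (fun k => a k * indb (Nat.eqb k j)) M = if Nat.ltb j M then a j else 0.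
Proof.
  induction M; simpl; [reflexivity|]. rewrite IHM. unfold indb.
  destruct (Nat.eqb_spec M j) as [->|Hne].
  - rewrite Nat.ltb_irrefl. replace (Nat.ltb j (S j)) with true
      by (symmetry; apply Nat.ltb_lt; lia). ring.
  - destruct (Nat.ltb_spec j M); destruct (Nat.ltb_spec j (S M)); lia || ring.
Qed.

Lemma ssum_indicator (a : nat -> R) M j : (forall k, (M <= k)%nat -> a k = 0) ->
  ssum (fun k => a k * indb (Nat.eqb k j)) M = a j.
Proof.
  intro H. rewrite ssum_indicator_gen.
  destruct (Nat.ltb_spec j M); [reflexivity|]. rewrite H; auto.
Qed.

Definition sumL {A} (f : A -> R) (xs : list A) : R := fold_right Rplus 0 (map f xs).

Lemma sumL_app {A} (f : A -> R) xs ys : sumL f (xs ++ ys) = sumL f xs + sumL f ys.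
Proof. induction xs; unfold sumL in *; simpl; [lra|rewrite IHxs; lra]. Qed.

Lemma sumL_flat_map {A B} (f : B -> R) (g : A -> list B) xs :
  sumL f (flat_map g xs) = sumL (fun x => sumL f (g x)) xs.
Proof. induction xs; simpl; [reflexivity|]. rewrite sumL_app, IHxs. reflexivity. Qed.

Lemma sumL_map {A B} (f : B -> R) (g : A -> B) xs :
  sumL f (map g xs) = sumL (fun x => f (g x)) xs.
Proof. unfold sumL. now rewrite map_map. Qed.

Lemma sumL_seq f K : sumL f (seq 0 K) = ssum f K.
Proof.
  induction K; [reflexivity|].
  rewrite seq_S, sumL_app, IHK. unfold sumL; simpl; lra.
Qed.

Lemma sumL_lin {A} (f g : A -> R) a b xs :
  sumL (fun s => a * f s + b * g s) xs = a * sumL f xs + b * sumL g xs.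
Proof. induction xs; unfold sumL in *; simpl; [lra|rewrite IHxs; lra]. Qed.

Lemma sumL_ext {A} (f g : A -> R) xs : (forall x, f x = g x) -> sumL f xs = sumL g xs.
Proof. intro H. unfold sumL. f_equal. now apply map_ext. Qed.

Lemma sumL_ssum {A} (a : A -> R) (b : nat -> A -> R) K xs :
  sumL (fun s => a s * ssum (fun i => b i s) K) xs
  = ssum (fun i => sumL (fun s => a s * b i s) xs) K.
Proof.
  induction xs; unfold sumL in *; simpl.
  - induction K; simpl; lra.
  - rewrite IHxs, <- ssum_scal, <- ssum_plus. apply ssum_ext. intros; simpl; lra.
Qed.

Lemma INR_count_seq (P : nat -> bool) K :
  INR (length (filter P (seq 0 K))) = ssum (fun i => indb (P i)) K.
Proof.
  induction K; [reflexivity|].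
  rewrite seq_S, filter_app, length_app, plus_INR, IHK. simpl.
  unfold indb. destruct (P K); simpl; lra.
Qed.

Lemma Series_eq u l : infinite_sum u l -> Series u = l.
Proof.
  intro H. unfold Series. apply (uniqueness_sum u); [|exact H].
  apply epsilon_spec. now exists l.
Qed.

Lemma Series_spec u : (exists l, infinite_sum u l) -> infinite_sum u (Series u).
Proof. intro H. unfold Series. now apply epsilon_spec. Qed.

Lemma CV_const c : Un_cv (fun _ => c) c.
Proof.
  intros eps H; exists 0%nat; intros.
  unfold R_dist; rewrite Rminus_diag, Rabs_R0; lra.
Qed.

Lemma isum_ext u v l : (forall n, u n = v n) -> infinite_sum u l -> infinite_sum v l.
Proof.
  intros E H eps Heps. destruct (H eps Heps) as [N HN]. exists N. intros n Hn.
  rewrite <- (sum_eq u v n) by auto. now apply HN.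
Qed.

Lemma isum_plus u v l1 l2 : infinite_sum u l1 -> infinite_sum v l2 ->
  infinite_sum (fun n => u n + v n) (l1 + l2).
Proof.
  intros H1 H2 eps Heps. destruct (CV_plus _ _ _ _ H1 H2 eps Heps) as [N HN].
  exists N. intros n Hn. rewrite sum_plus. now apply HN.
Qed.

Lemma isum_minus u v l1 l2 : infinite_sum u l1 -> infinite_sum v l2 ->
  infinite_sum (fun n => u n - v n) (l1 - l2).
Proof.
  intros H1 H2 eps Heps. destruct (CV_minus _ _ _ _ H1 H2 eps Heps) as [N HN].
  exists N. intros n Hn. rewrite minus_sum. now apply HN.
Qed.

Lemma isum_scal u c l : infinite_sum u l -> infinite_sum (fun n => u n * c) (l * c).
Proof.
  intros H eps Heps. destruct (CV_mult _ _ _ _ H (CV_const c) eps Heps) as [N HN].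
  exists N. intros n Hn. rewrite <- scal_sum, Rmult_comm. now apply HN.
Qed.

Lemma isum_le u v l1 l2 : (forall n, u n <= v n) ->
  infinite_sum u l1 -> infinite_sum v l2 -> l1 <= l2.
Proof.
  intros E H1 H2. apply (@Rle_cv_lim _ _ _ _ (fun N => sum_Rle u v N (fun n _ => E n)) H1 H2).
Qed.

Definition bounded (a : nat -> R) : Prop := exists M, forall n, Rabs (a n) <= M.

Definition Elaw (q : nat -> R) (a : nat -> R) : R := Series (fun n => q n * a n).

Section LawExpectation.
Variable q : nat -> R.
Hypothesis qpos : forall n, 0 <= q n.
Hypothesis q1 : infinite_sum q 1.

Lemma partial_mass_le1 N : sum_f_R0 q N <= 1.
Proof. exact (sum_incr q N 1 q1 qpos). Qed.

(* Bounded functions are q-summable (comparison with 2M·q after a shift by M). *)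
Lemma Elaw_spec a : bounded a -> infinite_sum (fun n => q n * a n) (Elaw q a).
Proof.
  intros [M HM]. apply Series_spec.
  destruct (Rseries_CV_comp (fun n => q n * (a n + M)) (fun n => q n * (2 * M))) as [l Hl].
  { intro n. pose proof (Rabs_le_bounds _ _ (HM n)). pose proof (qpos n). split; nra. }
  { exists (1 * (2 * M)). now apply isum_scal. }
  exists (l - 1 * M).
  apply (isum_ext (fun n => q n * (a n + M) - q n * M)); [intro; ring|].
  apply isum_minus; [exact Hl|]. now apply isum_scal.
Qed.

Lemma bounded_const c : bounded (fun _ => c).
Proof. exists (Rabs c); intro; lra. Qed.

Lemma bounded_scal a c : bounded a -> bounded (fun n => c * a n).
Proof.
  intros [M HM]; exists (Rabs c * M); intro n. rewrite Rabs_mult.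
  apply Rmult_le_compat_l; [apply Rabs_pos|apply HM].
Qed.

Lemma Elaw_plus a b : bounded a -> bounded b ->
  Elaw q (fun n => a n + b n) = Elaw q a + Elaw q b.
Proof.
  intros Ha Hb. apply Series_eq.
  apply (isum_ext (fun n => q n * a n + q n * b n)); [intro; ring|].
  apply isum_plus; now apply Elaw_spec.
Qed.

Lemma Elaw_minus a b : bounded a -> bounded b ->
  Elaw q (fun n => a n - b n) = Elaw q a - Elaw q b.
Proof.
  intros Ha Hb. apply Series_eq.
  apply (isum_ext (fun n => q n * a n - q n * b n)); [intro; ring|].
  apply isum_minus; now apply Elaw_spec.
Qed.

Lemma Elaw_scal a c : bounded a -> Elaw q (fun n => c * a n) = c * Elaw q a.
Proof.
  intros Ha. apply Series_eq.
  apply (isum_ext (fun n => q n * a n * c)); [intro; ring|].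
  rewrite Rmult_comm. apply isum_scal; now apply Elaw_spec.
Qed.

Lemma Elaw_const c : Elaw q (fun _ => c) = c.
Proof. apply Series_eq. pose proof (isum_scal q c 1 q1) as H. now rewrite Rmult_1_l in H. Qed.

Lemma Elaw_le a b : bounded a -> bounded b ->
  (forall n, 0 < q n -> a n <= b n) -> Elaw q a <= Elaw q b.
Proof.
  intros Ha Hb H. apply (isum_le (fun n => q n * a n) (fun n => q n * b n));
    [|now apply Elaw_spec..].
  intro n. destruct (qpos n) as [Hq|Hq]; [specialize (H n Hq); nra|rewrite <- Hq; lra].
Qed.

Lemma Elaw_ext a b : (forall n, 0 < q n -> a n = b n) -> Elaw q a = Elaw q b.
Proof.
  intro H. unfold Elaw. f_equal. apply functional_extensionality. intro n.
  destruct (qpos n) as [Hq|Hq]; [now rewrite H|rewrite <- Hq; ring].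
Qed.

Lemma Elaw_abs a c : (forall n, Rabs (a n) <= c) -> Rabs (Elaw q a) <= c.
Proof.
  intro H. assert (Ha : bounded a) by now exists c.
  apply Rabs_le. split.
  - rewrite <- (Elaw_const (-c)). apply Elaw_le; auto using bounded_const.
    intros n _. pose proof (Rabs_le_bounds _ _ (H n)). lra.
  - rewrite <- (Elaw_const c). apply Elaw_le; auto using bounded_const.
    intros n _. pose proof (Rabs_le_bounds _ _ (H n)). lra.
Qed.

Lemma Elaw_tail a M N : (forall k, Rabs (a k) <= M) ->
  Rabs (Elaw q a - sum_f_R0 (fun k => q k * a k) N) <= M * (1 - sum_f_R0 q N).
Proof.
  intro H.
  assert (Hs : infinite_sum (fun n => q n * a n) (Elaw q a)) by (apply Elaw_spec; now exists M).
  assert (HM : infinite_sum (fun k => q k * M) (1 * M)) by now apply isum_scal.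
  pose proof (sum_maj1 (fun k _ => q k * a k) _ 0 _ _ N Hs HM) as Hmaj.
  rewrite <- scal_sum, Rmult_1_l in Hmaj. unfold SP in Hmaj.
  rewrite Rmult_minus_distr_l, Rmult_1_r. apply Hmaj.
  intro k. rewrite Rabs_mult, Rabs_right by (apply Rle_ge, qpos).
  apply Rmult_le_compat_l; auto.
Qed.

Lemma partial_sum_abs b M N : (forall n, Rabs (b n) <= M) ->
  Rabs (sum_f_R0 (fun n => q n * b n) N) <= M.
Proof.
  intro H. assert (HM : 0 <= M) by (pose proof (Rabs_pos (b 0%nat)); pose proof (H 0%nat); lra).
  eapply Rle_trans; [apply sum_f_R0_triangle|].
  apply Rle_trans with (sum_f_R0 (fun n => q n * M) N).
  - apply sum_Rle. intros n _. rewrite Rabs_mult, Rabs_right by (apply Rle_ge, qpos).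
    apply Rmult_le_compat_l; auto.
  - rewrite <- scal_sum. pose proof (partial_mass_le1 N). nra.
Qed.

Lemma Elaw_partial_sum (h : nat -> nat -> R) M N : (forall m n, Rabs (h m n) <= M) ->
  Elaw q (fun m => sum_f_R0 (fun n => q n * h m n) N)
  = sum_f_R0 (fun n => q n * Elaw q (fun m => h m n)) N.
Proof.
  intro H. assert (Hb : forall n, bounded (fun m => h m n)) by (intro n; exists M; auto).
  induction N; simpl.
  - now apply Elaw_scal.
  - rewrite Elaw_plus, IHN, Elaw_scal; auto using bounded_scal.
    exists M; intro; now apply partial_sum_abs.
Qed.

Lemma Elaw_fubini (h : nat -> nat -> R) M : (forall m n, Rabs (h m n) <= M) ->
  Elaw q (fun m => Elaw q (fun n => h m n)) = Elaw q (fun n => Elaw q (fun m => h m n)).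
Proof.
  intro H.
  assert (HM : 0 <= M) by (pose proof (Rabs_pos (h 0%nat 0%nat)); pose proof (H 0%nat 0%nat); lra).
  set (s := fun N => sum_f_R0 (fun n => q n * Elaw q (fun m => h m n)) N).
  assert (Hcol : Un_cv s (Elaw q (fun n => Elaw q (fun m => h m n)))).
  { apply Elaw_spec. exists M. intro n. apply Elaw_abs. intro; apply H. }
  assert (Hrow : Un_cv s (Elaw q (fun m => Elaw q (fun n => h m n)))).
  { intros eps Heps.
    destruct (q1 (eps / (M + 1))) as [N0 HN0]; [apply Rdiv_lt_0_compat; lra|].
    exists N0. intros N HN. specialize (HN0 N HN). unfold R_dist in *.
    unfold s. rewrite <- Elaw_partial_sum with (M := M) by exact H.
    rewrite <- Elaw_minus; [| exists M; intro; now apply partial_sum_abs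
                           | exists M; intro; now apply Elaw_abs].
    eapply Rle_lt_trans.
    { apply Elaw_abs. intro m. rewrite Rabs_minus_sym. apply Elaw_tail. intro; apply H. }
    pose proof (partial_mass_le1 N). rewrite Rabs_left1 in HN0 by lra.
    apply Rle_lt_trans with ((M + 1) * (1 - sum_f_R0 q N)); [nra|].
    apply Rmult_lt_reg_l with (/ (M + 1)); [apply Rinv_0_lt_compat; lra|].
    rewrite <- Rmult_assoc, Rinv_l by lra. unfold Rdiv in HN0. lra. }
  exact (UL_sequence _ _ _ Hrow Hcol).
Qed.
End LawExpectation.

Definition list_bounded (f : list nat -> R) (M : R) : Prop := forall l, Rabs (f l) <= M.

Fixpoint swap_at (d : nat) (l : list nat) : list nat :=
  match d, l with
  | O, a :: b :: r => b :: a :: r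
  | O, _ => l
  | S d', a :: r => a :: swap_at d' r
  | S _, [] => []
  end.

Lemma nth_swap_at i : forall l, (S i < length l)%nat ->
  nth (S i) (swap_at i l) 0%nat = nth i l 0%nat.
Proof.
  induction i; intros l H.
  - destruct l as [|a [|b r]]; simpl in *; [lia..|reflexivity].
  - destruct l as [|a r]; simpl in *; [lia|]. apply IHi. lia.
Qed.

Lemma sum_swap_at i : forall l, list_sum (swap_at i l) = list_sum l.
Proof.
  induction i; intros l.
  - destruct l as [|a [|b r]]; simpl; lia.
  - destruct l as [|a r]; simpl; auto.
Qed.

Lemma nth_le_sum : forall l i, (nth i l 0 <= list_sum l)%nat.
Proof.
  induction l; intros [|i]; simpl; try lia. specialize (IHl i); lia.
Qed.

Section IidExpectation.
Variable q : nat -> R.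
Hypothesis qpos : forall n, 0 <= q n.
Hypothesis q1 : infinite_sum q 1.

Definition in_support (K : nat) (l : list nat) : Prop :=
  length l = K /\ Forall (fun n => 0 < q n) l.

Lemma Eiid_S K f : Eiid q (S K) f = Elaw q (fun n => Eiid q K (fun l => f (n :: l))).
Proof. reflexivity. Qed.

Lemma Eiid_abs K : forall f M, list_bounded f M -> Rabs (Eiid q K f) <= M.
Proof.
  induction K; intros f M H; [apply H|].
  rewrite Eiid_S. apply (Elaw_abs q qpos q1); auto. intro n. apply IHK. intro l; apply H.
Qed.

Lemma Eiid_bounded K f M : list_bounded f M ->
  bounded (fun n => Eiid q K (fun l => f (n :: l))).
Proof. intro H. exists M. intro n. apply Eiid_abs. intro; apply H. Qed.

Lemma Eiid_const K c : Eiid q K (fun _ => c) = c.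
Proof.
  induction K; [reflexivity|]. rewrite Eiid_S.
  rewrite (functional_extensionality (fun _ => Eiid q K (fun _ => c)) (fun _ => c))
    by (intro; apply IHK).
  now apply (Elaw_const q q1).
Qed.

Lemma Eiid_plus K : forall f g M1 M2, list_bounded f M1 -> list_bounded g M2 ->
  Eiid q K (fun l => f l + g l) = Eiid q K f + Eiid q K g.
Proof.
  induction K; intros f g M1 M2 H1 H2; [reflexivity|]. rewrite !Eiid_S.
  rewrite (functional_extensionality (fun n => Eiid q K (fun l => f (n :: l) + g (n :: l)))
    (fun n => Eiid q K (fun l => f (n :: l)) + Eiid q K (fun l => g (n :: l))))
    by (intro n; apply (IHK _ _ M1 M2); intro l; auto).
  apply (Elaw_plus q qpos q1); eapply Eiid_bounded; eauto.
Qed.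

Lemma Eiid_le K : forall f g M1 M2, list_bounded f M1 -> list_bounded g M2 ->
  (forall l, in_support K l -> f l <= g l) -> Eiid q K f <= Eiid q K g.
Proof.
  induction K; intros f g M1 M2 H1 H2 H; [apply H; now split|].
  rewrite !Eiid_S. apply (Elaw_le q qpos q1); auto; [eapply Eiid_bounded; eauto..|].
  intros n Hn. apply (IHK _ _ M1 M2); [intro; apply H1|intro; apply H2|].
  intros l [Hl1 Hl2]. apply H. split; [simpl; auto|now constructor].
Qed.

Lemma Eiid_ext K : forall f g, (forall l, in_support K l -> f l = g l) ->
  Eiid q K f = Eiid q K g.
Proof.
  induction K; intros f g H; [apply H; now split|].
  rewrite !Eiid_S. apply (Elaw_ext q qpos); auto.
  intros n Hn. apply IHK. intros l [Hl1 Hl2]. apply H. split; [simpl; auto|now constructor].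
Qed.

Lemma list_bounded_plus f g M1 M2 : list_bounded f M1 -> list_bounded g M2 ->
  list_bounded (fun l => f l + g l) (M1 + M2).
Proof.
  intros H1 H2 l. eapply Rle_trans; [apply Rabs_triang|].
  pose proof (H1 l); pose proof (H2 l); lra.
Qed.

Lemma Eiid_diff_abs K f g h M1 M2 M3 :
  list_bounded f M1 -> list_bounded g M2 -> list_bounded h M3 ->
  (forall l, in_support K l -> Rabs (f l - g l) <= h l) ->
  Rabs (Eiid q K f - Eiid q K g) <= Eiid q K h.
Proof.
  intros Hf Hg Hh H.
  assert (Hgf : Eiid q K g <= Eiid q K f + Eiid q K h).
  { rewrite <- (Eiid_plus K f h M1 M3) by auto.
    apply (Eiid_le K g _ M2 (M1 + M3)); auto using list_bounded_plus.
    intros l Hl. pose proof (Rabs_le_bounds _ _ (H l Hl)); lra. }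
  assert (Hfg : Eiid q K f <= Eiid q K g + Eiid q K h).
  { rewrite <- (Eiid_plus K g h M2 M3) by auto.
    apply (Eiid_le K f _ M1 (M2 + M3)); auto using list_bounded_plus.
    intros l Hl. pose proof (Rabs_le_bounds _ _ (H l Hl)); lra. }
  apply Rabs_le. lra.
Qed.

Lemma Eiid_swap d : forall K f M, list_bounded f M ->
  Eiid q K (fun l => f (swap_at d l)) = Eiid q K f.
Proof.
  induction d; intros K f M H.
  - destruct K as [|[|k]]; try reflexivity. rewrite !Eiid_S.
    apply (Elaw_fubini q qpos q1 (fun n m => Eiid q k (fun r => f (m :: n :: r))) M).
    intros; apply Eiid_abs; intro; apply H.
  - destruct K as [|k]; try reflexivity.
    rewrite !Eiid_S. f_equal. apply functional_extensionality; intro n.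
    apply (IHd k (fun l => f (n :: l)) M). intro; apply H.
Qed.

Lemma Eiid_exchangeable (G : nat -> nat -> R) M K :
  (forall i, list_bounded (fun l => G (nth i l 0%nat) (list_sum l)) M) ->
  forall i, (i < K)%nat ->
  Eiid q K (fun l => G (nth i l 0%nat) (list_sum l))
  = Eiid q K (fun l => G (nth 0 l 0%nat) (list_sum l)).
Proof.
  intros HG i. induction i as [|i IHi]; intro Hi; [reflexivity|].
  rewrite <- IHi by lia. rewrite <- (Eiid_swap i K _ M).
  - apply Eiid_ext. intros l [Hl _]. now rewrite nth_swap_at, sum_swap_at by lia.
  - apply HG.
Qed.

Lemma Eiid_marginal (h : nat -> R) K i :
  (i < K)%nat -> Eiid q K (fun l => h (nth i l 0%nat)) = Elaw q h.
Proof.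
  revert i. induction K as [|K IHK]; intros i Hi; [lia|].
  rewrite Eiid_S. destruct i as [|i].
  - f_equal. apply functional_extensionality; intro n. exact (Eiid_const K (h n)).
  - rewrite (functional_extensionality
      (fun n => Eiid q K (fun l => h (nth (S i) (n :: l) 0%nat))) (fun _ => Elaw q h))
      by (intro n; apply IHK; lia).
    apply (Elaw_const q q1).
Qed.
Lemma Eiid_ssum K (F : nat -> list nat -> R) M : (forall i, list_bounded (F i) M) -> forall n,
  Eiid q K (fun l => ssum (fun i => F i l) n) = ssum (fun i => Eiid q K (F i)) n.
Proof.
  intros HF n. induction n; simpl; [now apply Eiid_const|].
  rewrite (Eiid_plus K _ _ (INR n * M) M), IHn; auto.
  intro l. eapply Rle_trans; [apply ssum_abs|].
  rewrite <- ssum_const. apply ssum_le. intros; apply HF.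
Qed.
End IidExpectation.

(* [Bin π n j] = P(Bin(n, π) = j), by conditioning on the last of n trials. *)
Fixpoint Bin (pi : R) (n j : nat) : R :=
  match n with
  | O => if Nat.eqb j 0 then 1 else 0
  | S n' => match j with
            | O => (1 - pi) * Bin pi n' 0
            | S j' => pi * Bin pi n' j' + (1 - pi) * Bin pi n' (S j')
            end
  end.

Definition colour_prob (l : list nat) (c : nat) : R := INR (nth c l 0%nat) / INR (list_sum l).

Lemma colour_prob_range l i : 0 <= colour_prob l i <= 1.
Proof.
  unfold colour_prob. pose proof (nth_le_sum l i) as H.
  destruct (Nat.eq_dec (list_sum l) 0) as [H0|H0].
  - replace (nth i l 0%nat) with 0%nat by lia. simpl. unfold Rdiv. rewrite Rmult_0_l. lra.
  - assert (0 < INR (list_sum l)) by (apply lt_0_INR; lia).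
    split; [apply Rmult_le_pos; [apply pos_INR|left; now apply Rinv_0_lt_compat]|].
    apply Rmult_le_reg_r with (INR (list_sum l)); auto. unfold Rdiv.
    rewrite Rmult_assoc, Rinv_l, Rmult_1_r, Rmult_1_l by lra. now apply le_INR.
Qed.

Lemma colour_prob_sum l : (0 < list_sum l)%nat -> ssum (colour_prob l) (length l) = 1.
Proof.
  intro H.
  assert (Hsum : ssum (fun c => INR (nth c l 0%nat)) (length l) = INR (list_sum l)).
  { clear H. induction l as [|a l IHl]; [reflexivity|].
    simpl length. rewrite ssum_shift. simpl nth. rewrite IHl. simpl. rewrite plus_INR. ring. }
  unfold colour_prob. rewrite (ssum_ext _ (fun c => / INR (list_sum l) * INR (nth c l 0%nat)))
    by (intros; unfold Rdiv; ring).
  rewrite ssum_scal, Hsum. apply Rinv_l, not_0_INR. lia.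
Qed.

Section ColourCount.
Variable l : list nat.
Hypothesis l_pos : (0 < list_sum l)%nat.
Let K := length l.

Lemma tcount_cons c s i : tcount (c :: s) i = if Nat.eqb i c then S (tcount s i) else tcount s i.
Proof. unfold tcount; simpl. now destruct (Nat.eqb i c). Qed.

Lemma average_new_colour i (A B : R) : (i < K)%nat ->
  ssum (fun c => colour_prob l c * (if Nat.eqb i c then A else B)) K
  = colour_prob l i * A + (1 - colour_prob l i) * B.
Proof.
  intro Hi.
  rewrite (ssum_ext _ (fun c => if Nat.eqb i c then colour_prob l c * A
                                else colour_prob l c * B))
    by (intros c _; now destruct (Nat.eqb i c)).
  rewrite ssum_if by exact Hi.
  rewrite (ssum_ext _ (fun c => B * colour_prob l c)) by (intros; ring).
  rewrite ssum_scal, colour_prob_sum by exact l_pos. ring.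
Qed.

Lemma colour_count_law i : (i < K)%nat -> forall n j,
  sumL (fun s => draw_prob l s * indb (Nat.eqb (tcount s i) j)) (draws K n)
  = Bin (colour_prob l i) n j.
Proof.
  intros Hi n. induction n as [|n IHn]; intro j.
  - unfold sumL, draw_prob, indb, tcount; simpl. destruct j; simpl; lra.
  - simpl draws. rewrite sumL_flat_map.
    rewrite (sumL_ext _ (fun s =>
      colour_prob l i * (draw_prob l s * indb (Nat.eqb (S (tcount s i)) j))
      + (1 - colour_prob l i) * (draw_prob l s * indb (Nat.eqb (tcount s i) j)))).
    2: { intro s. rewrite sumL_map, sumL_seq, <- average_new_colour by exact Hi.
         apply ssum_ext. intros c _. unfold draw_prob at 1. simpl fold_right.
         rewrite tcount_cons. fold (draw_prob l s).
         destruct (Nat.eqb i c); unfold colour_prob; lra. }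
    rewrite sumL_lin, IHn. destruct j as [|j].
    + rewrite (sumL_ext _ (fun s => 0 * draw_prob l s + 0 * draw_prob l s))
        by (intro; unfold indb; simpl; ring).
      rewrite sumL_lin. simpl. ring.
    + simpl Bin. now rewrite <- (IHn j).
Qed.
End ColourCount.

Lemma EW_cond_binomial p j l : (0 < list_sum l)%nat ->
  EW_cond p j l = ssum (fun i => Bin (colour_prob l i) (ndraws p l) j) (length l).
Proof.
  intro H. unfold EW_cond.
  fold (sumL (fun s => draw_prob l s * INR (W (length l) j s))
             (draws (length l) (ndraws p l))).
  rewrite (sumL_ext _ (fun s => draw_prob l s
             * ssum (fun i => indb (Nat.eqb (tcount s i) j)) (length l)))
    by (intro s; unfold W; now rewrite INR_count_seq).
  rewrite sumL_ssum. apply ssum_ext. intros i Hi. now apply colour_count_law.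
Qed.

Section BinomialFacts.
Variable pi : R.

Lemma Bin_range n k : 0 <= pi <= 1 -> 0 <= Bin pi n k <= 1.
Proof.
  intro hpi. revert k. induction n as [|n IHn]; intro k; simpl.
  - destruct (Nat.eqb k 0); lra.
  - destruct k as [|k].
    + specialize (IHn 0%nat). split; nra.
    + pose proof (IHn k); pose proof (IHn (S k)). split; nra.
Qed.

Lemma Bin_zero n : forall k, (n < k)%nat -> Bin pi n k = 0.
Proof.
  induction n; intros [|k] Hk; simpl; try lia; [reflexivity|].
  rewrite !IHn by lia. ring.
Qed.

Lemma BinSS n k : Bin pi (S n) (S k) = pi * Bin pi n k + (1 - pi) * Bin pi n (S k).
Proof. reflexivity. Qed.

Lemma Bin_mul n : forall k, INR (S k) * Bin pi (S n) (S k) = INR (S n) * pi * Bin pi n k.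
Proof.
  induction n as [|n IHn]; intro k.
  - rewrite BinSS. destruct k as [|[|k]]; simpl; ring.
  - rewrite (BinSS (S n) k). destruct k as [|k].
    + assert (Hx : Bin pi (S n) 1 = INR (S n) * pi * Bin pi n 0)
        by (rewrite <- (IHn 0%nat); simpl INR; ring).
      rewrite Hx. change (Bin pi (S n) 0) with ((1 - pi) * Bin pi n 0).
      rewrite (S_INR (S n)). simpl INR. ring.
    + replace (INR (S (S k)) * (pi * Bin pi (S n) (S k) + (1 - pi) * Bin pi (S n) (S (S k))))
        with (pi * (INR (S k) * Bin pi (S n) (S k)) + pi * Bin pi (S n) (S k)
              + (1 - pi) * (INR (S (S k)) * Bin pi (S n) (S (S k))))
        by (rewrite (S_INR (S k)); ring).
      rewrite (IHn k), (IHn (S k)), (BinSS n k), (S_INR (S n)). ring.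
Qed.

Lemma Bin_sum n : forall M, (n < M)%nat -> ssum (Bin pi n) M = 1.
Proof.
  induction n as [|n IHn]; intros [|M] HM; try lia; rewrite ssum_shift.
  - rewrite (ssum_ext _ (fun _ => 0)), ssum_const by reflexivity. simpl. ring.
  - change (Bin pi (S n) 0) with ((1 - pi) * Bin pi n 0).
    rewrite (ssum_ext _ (fun k => pi * Bin pi n k + (1 - pi) * Bin pi n (S k)))
      by reflexivity.
    rewrite ssum_plus, !ssum_scal, IHn by lia.
    assert (H2 : ssum (Bin pi n) (S M) = 1) by (apply IHn; lia).
    rewrite ssum_shift in H2.
    replace (ssum (fun i => Bin pi n (S i)) M) with (1 - Bin pi n 0) by lra. ring.
Qed.

Lemma Bin_size_bias (g : nat -> R) n :
  ssum (fun k => Bin pi (S n) k * INR k * g k) (S (S n))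
  = INR (S n) * pi * ssum (fun k => Bin pi n k * g (S k)) (S n).
Proof.
  rewrite ssum_shift. simpl INR at 1. rewrite Rmult_0_r, Rmult_0_l, Rplus_0_l.
  rewrite <- ssum_scal. apply ssum_ext. intros k _.
  rewrite <- Rmult_assoc, <- (Bin_mul n k). ring.
Qed.

Lemma Bin_last_trial (g : nat -> R) n :
  ssum (fun k => Bin pi (S n) k * g (S k)) (S (S n))
  = pi * ssum (fun k => Bin pi n k * g (S (S k))) (S n)
    + (1 - pi) * ssum (fun k => Bin pi n k * g (S k)) (S n).
Proof.
  rewrite ssum_shift. change (Bin pi (S n) 0) with ((1 - pi) * Bin pi n 0).
  rewrite (ssum_ext _ (fun k => pi * (Bin pi n k * g (S (S k)))
                                + (1 - pi) * (Bin pi n (S k) * g (S (S k)))))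
    by (intros; rewrite BinSS; ring).
  rewrite ssum_plus, !ssum_scal, (ssum_shift (fun k => Bin pi n k * g (S k))).
  replace (ssum (fun k => Bin pi n (S k) * g (S (S k))) (S n))
    with (ssum (fun k => Bin pi n (S k) * g (S (S k))) n)
    by (simpl; rewrite Bin_zero by lia; ring).
  ring.
Qed.

Lemma Bin_stein_identity (g : nat -> R) n :
  ssum (fun k => Bin pi (S n) k * (INR k * g k - INR (S n) * pi * g (S k))) (S (S n))
  = INR (S n) * pi ^ 2 * ssum (fun k => Bin pi n k * (g (S k) - g (S (S k)))) (S n).
Proof.
  rewrite (ssum_ext _ (fun k => Bin pi (S n) k * INR k * g k
                                + (- (INR (S n) * pi)) * (Bin pi (S n) k * g (S k))))
    by (intros; ring).
  rewrite ssum_plus, ssum_scal, Bin_size_bias, Bin_last_trial.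
  rewrite (ssum_ext (fun k => Bin pi n k * (g (S k) - g (S (S k))))
             (fun k => Bin pi n k * g (S k) + (-1) * (Bin pi n k * g (S (S k)))))
    by (intros; ring).
  rewrite ssum_plus, ssum_scal. ring.
Qed.
End BinomialFacts.

(* An algebraic inequality behind the Stein factor (1 - e^{-λ})/λ.  With
   w = λ^m/m!, s = Σ_{i≤m} λ^i/i!, r = m+1, um = wλ/r (the next term), E = e^λ,
   the quantities P and Q below are the coefficients of the increments of the
   Stein solution, and the hypotheses are the partial-sum bounds proved below. *)
Lemma stein_factor_algebra (w lam r s E : R) :
  0 < w -> 0 < lam -> 0 < r -> 0 <= s ->
  lam * s <= r * (s + w * lam / r - 1) ->
  (r - lam) * (E - s) <= lam * w ->
  let um := w * lam / r in
  let P := (s + um) / um - s / w in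
  let Q := (E - s) / w - (E - s - um) / um in
  0 <= P /\ 0 <= Q /\ (E - s - um) * P + s * Q <= E - 1.
Proof.
  intros Hw Hl Hr Hs H1 H2 um P Q.
  assert (Hum : 0 < um) by (unfold um; apply Rdiv_lt_0_compat; nra).
  assert (Hwl : 0 < / (w * lam)) by (apply Rinv_0_lt_compat; nra).
  assert (HP : P = (r * s - lam * s + w * lam) * / (w * lam)) by (unfold P, um; field; lra).
  assert (HQ : Q = (lam * w - (r - lam) * (E - s)) * / (w * lam)) by (unfold Q, um; field; lra).
  assert (Hsum : (E - s - um) * P + s * Q = E - s - um + s * lam / r)
    by (unfold P, Q, um; field; lra).
  assert (Hsl : s * lam / r <= s + um - 1).
  { unfold um. apply Rmult_le_reg_l with r; auto.
    replace (r * (s * lam / r)) with (lam * s) by (field; lra). lra. }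
  split; [|split].
  - rewrite HP. apply Rmult_le_pos; [|lra].
    assert (r * (s + w * lam / r - 1) = r * s + w * lam - r) by (field; lra). nra.
  - rewrite HQ. apply Rmult_le_pos; lra.
  - rewrite Hsum. lra.
Qed.

Section PoissonStein.
Variable lam : R.
Hypothesis lam_pos : 0 < lam.
Variable j : nat.

Definition expterm (i : nat) : R := lam ^ i / INR (fact i).
Definition expsum (m : nat) : R := sum_f_R0 expterm m.
Let E := exp lam.

Lemma expterm_pos i : 0 < expterm i.
Proof. apply Rdiv_lt_0_compat; [now apply pow_lt|apply INR_fact_lt_0]. Qed.

Lemma expterm_S i : expterm (S i) = expterm i * lam / INR (S i).
Proof.
  unfold expterm. change (fact (S i)) with (S i * fact i)%nat. rewrite mult_INR.
  simpl pow. field. split; [apply INR_fact_neq_0|apply not_0_INR; lia].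
Qed.

Lemma exp_series : infinite_sum expterm E.
Proof.
  unfold E, exp. destruct (exist_exp lam) as [l Hl]. simpl.
  apply (isum_ext (fun i => / INR (fact i) * lam ^ i)); [|exact Hl].
  intro; unfold expterm, Rdiv; ring.
Qed.

Lemma expsum_S m : expsum (S m) = expsum m + expterm (S m).
Proof. reflexivity. Qed.

Lemma expsum_le_exp m : expsum m <= E.
Proof. apply (sum_incr _ m E exp_series). intro; left; apply expterm_pos. Qed.

Lemma expsum_ge1 m : 1 <= expsum m.
Proof.
  induction m; [unfold expsum, expterm; simpl; lra|].
  rewrite expsum_S. pose proof (expterm_pos (S m)); lra.
Qed.

Lemma expsum_mono m k : (m <= k)%nat -> expsum m <= expsum k.
Proof.
  induction 1; [lra|]. rewrite expsum_S. pose proof (expterm_pos (S m0)); lra.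
Qed.

Lemma expterm_le_expsum m i : (i <= m)%nat -> expterm i <= expsum m.
Proof.
  intro H. apply Rle_trans with (expsum i); [|now apply expsum_mono].
  destruct i; [unfold expsum; simpl; lra|].
  rewrite expsum_S. pose proof (expsum_ge1 i); lra.
Qed.

Lemma expterm_le_tail m i : (m < i)%nat -> expterm i <= E - expsum m.
Proof.
  intro H. destruct i as [|i]; [lia|].
  pose proof (expsum_mono m i ltac:(lia)). pose proof (expsum_le_exp (S i)).
  rewrite expsum_S in *. lra.
Qed.

(* λ S_n ≤ (n+1)(S_{n+1} - 1), by induction using (n+2) u_{n+2} = λ u_{n+1}. *)
Lemma expsum_growth n : lam * expsum n <= INR (S n) * (expsum (S n) - 1).
Proof.
  induction n as [|n IHn].
  - unfold expsum; simpl. rewrite expterm_S. unfold expterm; simpl. lra.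
  - rewrite (expsum_S (S n)), (expsum_S n) in *.
    assert (Hu : INR (S (S n)) * expterm (S (S n)) = lam * expterm (S n))
      by (rewrite expterm_S; field; apply not_0_INR; lia).
    pose proof (expsum_ge1 (S n)) as Hge. rewrite expsum_S in Hge.
    assert (INR (S n) * (expsum n + expterm (S n) - 1)
            <= INR (S (S n)) * (expsum n + expterm (S n) - 1))
      by (apply Rmult_le_compat_r; [lra|apply le_INR; lia]).
    nra.
Qed.

Lemma exp_tail_partial m k :
  (INR m + 1 - lam) * (expsum (k + m) - expsum m) <= lam * expterm m.
Proof.
  assert (I : forall k, (INR m + 1) * (expsum (k + m) - expsum m)
          <= lam * (expsum (k + m) - expsum m - expterm (k + m) + expterm m)).
  { induction k0; simpl; [lra|].
    rewrite expsum_S.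
    assert (Hu : INR (S (k0 + m)) * expterm (S (k0 + m)) = lam * expterm (k0 + m))
      by (rewrite expterm_S; field; apply not_0_INR; lia).
    assert ((INR m + 1) * expterm (S (k0 + m)) <= INR (S (k0 + m)) * expterm (S (k0 + m)))
      by (apply Rmult_le_compat_r; [left; apply expterm_pos|rewrite <- S_INR; apply le_INR; lia]).
    nra. }
  specialize (I k). pose proof (expterm_pos (k + m)). nra.
Qed.

(* (m+1-λ)(e^λ - S_m) ≤ λ u_m: the tail of the exponential series beyond m is
   dominated by a geometric series of ratio λ/(m+1). *)
Lemma exp_tail_bound m : (INR m + 1 - lam) * (E - expsum m) <= lam * expterm m.
Proof.
  assert (Hc := CV_shift' _ m _ exp_series).
  apply (@Rle_cv_lim _ (fun _ => lam * expterm m) _ _ (exp_tail_partial m)).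
  - apply (CV_mult _ _ _ _ (CV_const _) (CV_minus _ _ _ _ Hc (CV_const _))).
  - apply CV_const.
Qed.

Definition stein_sol (k : nat) : R :=
  match k with
  | O => 0
  | S k' => expterm j * (indb (Nat.leb j k') * E - expsum k') / (lam * expterm k' * E)
  end.

Lemma stein_equation k :
  INR k * stein_sol k - lam * stein_sol (S k) = expterm j / E - indb (Nat.eqb k j).
Proof.
  pose proof (exp_pos lam) as HE. fold E in HE.
  destruct k as [|k].
  - assert (H0 : expterm 0 = 1) by (unfold expterm; simpl; field).
    unfold stein_sol, expsum, indb; simpl. rewrite H0.
    destruct j; simpl; [rewrite H0|]; field; lra.
  - unfold stein_sol. rewrite expsum_S, (expterm_S k).
    pose proof (expterm_pos k). assert (INR (S k) <> 0) by (apply not_0_INR; lia).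
    destruct (Nat.leb_spec j k); destruct (Nat.leb_spec j (S k));
      destruct (Nat.eqb_spec (S k) j) as [Hj|]; try lia; unfold indb;
      [|rewrite <- Hj, (expterm_S k)|]; field; repeat split; lra.
Qed.

(* λ e^λ (g(m+2) - g(m+1)) lies in [-(e^λ - 1), e^λ - 1]: it equals -u_j Q when
   j ≤ m, (e^λ - S_{m+1}) P + S_m Q when j = m+1, and -u_j P when j > m+1. *)
Lemma stein_sol_scaled_increment m :
  Rabs (lam * E * (stein_sol (S (S m)) - stein_sol (S m))) <= E - 1.
Proof.
  pose proof (exp_pos lam) as HE; fold E in HE.
  set (w := expterm m). set (s := expsum m). set (r := INR (S m)).
  assert (Hw : 0 < w) by apply expterm_pos.
  assert (Hr : 0 < r) by (apply lt_0_INR; lia).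
  assert (Hs : 1 <= s) by apply expsum_ge1.
  assert (Hnext : expterm (S m) = w * lam / r)
    by (unfold w, r; rewrite expterm_S; field; apply not_0_INR; lia).
  assert (HSp : expsum (S m) = s + w * lam / r) by (now rewrite expsum_S, Hnext).
  assert (H1 : lam * s <= r * (s + w * lam / r - 1)) by (rewrite <- HSp; apply expsum_growth).
  assert (H2 : (r - lam) * (E - s) <= lam * w)
    by (unfold r, s, w; rewrite S_INR; apply exp_tail_bound).
  assert (H3 : s + w * lam / r <= E) by (rewrite <- HSp; apply expsum_le_exp).
  destruct (stein_factor_algebra w lam r s E Hw lam_pos Hr ltac:(lra) H1 H2) as [HP [HQ Hsum]].
  set (um := w * lam / r) in *.
  set (P := (s + um) / um - s / w) in *.
  set (Q := (E - s) / w - (E - s - um) / um) in *.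
  assert (Hum : 0 < um) by (unfold um; apply Rdiv_lt_0_compat; nra).
  assert (HuP : 0 <= (E - s - um) * P) by (apply Rmult_le_pos; lra).
  assert (HsQ : 0 <= s * Q) by (apply Rmult_le_pos; lra).
  unfold stein_sol. rewrite Hnext, HSp. fold w s um.
  destruct (le_lt_dec j m) as [Hjm|Hjm]; [|destruct (Nat.eq_dec j (S m)) as [Hj|Hj]].
  - assert (Hu : 0 < expterm j <= s) by (split; [apply expterm_pos|now apply expterm_le_expsum]).
    rewrite (proj2 (Nat.leb_le j m)), (proj2 (Nat.leb_le j (S m))) by lia.
    match goal with |- Rabs ?x <= _ =>
      replace x with (- (expterm j * Q)) by (unfold Q, indb; field; lra) end.
    rewrite Rabs_Ropp, Rabs_right by (apply Rle_ge, Rmult_le_pos; lra).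
    assert (expterm j * Q <= s * Q) by (apply Rmult_le_compat_r; lra). lra.
  - rewrite Hj, Nat.leb_refl, (proj2 (Nat.leb_gt (S m) m)) by lia.
    rewrite Hnext. fold um.
    match goal with |- Rabs ?x <= _ =>
      replace x with ((E - s - um) * P + s * Q) by (unfold P, Q, indb; field; lra) end.
    rewrite Rabs_right; lra.
  - assert (Hu : 0 < expterm j <= E - s - um).
    { split; [apply expterm_pos|]. rewrite <- Rminus_plus_distr, <- HSp.
      apply expterm_le_tail. lia. }
    rewrite (proj2 (Nat.leb_gt j m)), (proj2 (Nat.leb_gt j (S m))) by lia.
    match goal with |- Rabs ?x <= _ =>
      replace x with (- (expterm j * P)) by (unfold P, indb; field; lra) end.
    rewrite Rabs_Ropp, Rabs_right by (apply Rle_ge, Rmult_le_pos; lra).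
    assert (expterm j * P <= (E - s - um) * P) by (apply Rmult_le_compat_r; lra). lra.
Qed.

Lemma stein_sol_increment m :
  Rabs (stein_sol (S (S m)) - stein_sol (S m)) <= (1 - / E) / lam.
Proof.
  pose proof (exp_pos lam) as HE; fold E in HE.
  assert (HlE : 0 < lam * E) by nra.
  apply Rmult_le_reg_l with (lam * E); [exact HlE|].
  rewrite <- (Rabs_right (lam * E)) at 1 by lra. rewrite <- Rabs_mult.
  replace (lam * E * ((1 - / E) / lam)) with (E - 1) by (field; lra).
  apply stein_sol_scaled_increment.
Qed.
End PoissonStein.

Definition pois (x : R) (j : nat) : R := x ^ j / INR (fact j) * exp (- x).

Lemma pois_expterm x j : pois x j = expterm x j / exp x.
Proof. unfold pois, expterm. rewrite exp_Ropp. unfold Rdiv. ring. Qed.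

Lemma pois_at_zero j : pois 0 j = if Nat.eqb j 0 then 1 else 0.
Proof.
  unfold pois. rewrite Ropp_0, exp_0.
  destruct j; simpl; [field|unfold Rdiv; ring].
Qed.

Lemma Bin_at_zero N j : Bin 0 N j = if Nat.eqb j 0 then 1 else 0.
Proof.
  revert j; induction N; intro j; simpl; [reflexivity|].
  destruct j as [|[|j]]; rewrite ?IHN; simpl; ring.
Qed.

Lemma pois_range x j : 0 <= x -> 0 <= pois x j <= 1.
Proof.
  intros [Hx|<-]; [|rewrite pois_at_zero; destruct (Nat.eqb j 0); lra].
  rewrite pois_expterm. pose proof (exp_pos x).
  pose proof (expterm_pos x Hx j). pose proof (expterm_le_expsum x Hx j j (Nat.le_refl _)).
  pose proof (expsum_le_exp x Hx j).
  split; [left; now apply Rdiv_lt_0_compat|].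
  apply Rmult_le_reg_r with (exp x); auto. unfold Rdiv.
  rewrite Rmult_assoc, Rinv_l by lra. lra.
Qed.

Lemma Bin_minus_pois pi n j (lam := INR (S n) * pi) : 0 < pi ->
  Bin pi (S n) j - pois lam j
  = - (INR (S n) * pi ^ 2 * ssum (fun k => Bin pi n k
         * (stein_sol lam j (S k) - stein_sol lam j (S (S k)))) (S n)).
Proof.
  intro Hpi. assert (Hlam : 0 < lam) by (apply Rmult_lt_0_compat; [apply lt_0_INR; lia|lra]).
  rewrite <- Bin_stein_identity, pois_expterm.
  rewrite (ssum_ext _ (fun k => expterm lam j / exp lam * Bin pi (S n) k
                                + (-1) * (Bin pi (S n) k * indb (Nat.eqb k j))))
    by (intros k _; fold lam; rewrite stein_equation by exact Hlam; ring).
  rewrite ssum_plus, !ssum_scal, Bin_sum, ssum_indicator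
    by first [lia | intros; apply Bin_zero; lia].
  ring.
Qed.

Theorem bin_pois_bound pi N j : 0 <= pi <= 1 ->
  Rabs (Bin pi N j - pois (INR N * pi) j) <= Rmin (INR N * pi) 1 * pi.
Proof.
  intro hpi.
  destruct N as [|n].
  { simpl INR. rewrite Rmult_0_l, pois_at_zero, Rmin_left by lra. simpl Bin.
    rewrite Rminus_diag, Rabs_R0. lra. }
  destruct (Req_dec pi 0) as [->|Hpi0].
  { rewrite Rmult_0_r, pois_at_zero, Bin_at_zero, Rminus_diag, Rabs_R0, Rmin_left by lra. lra. }
  assert (Hpi : 0 < pi) by lra.
  set (lam := INR (S n) * pi).
  assert (Hlam : 0 < lam) by (apply Rmult_lt_0_compat; [apply lt_0_INR; lia|lra]).
  pose proof (exp_pos lam) as HE.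
  set (c := (1 - / exp lam) / lam).
  assert (Hsum : Rabs (ssum (fun k => Bin pi n k
           * (stein_sol lam j (S k) - stein_sol lam j (S (S k)))) (S n)) <= c).
  { eapply Rle_trans; [apply ssum_abs|].
    apply Rle_trans with (ssum (fun k => c * Bin pi n k) (S n)).
    - apply ssum_le. intros k _. pose proof (Bin_range pi n k hpi).
      rewrite Rabs_mult, Rabs_right, Rmult_comm by lra.
      apply Rmult_le_compat_r; [lra|].
      rewrite Rabs_minus_sym. now apply stein_sol_increment.
    - rewrite ssum_scal, Bin_sum by lia. lra. }
  assert (Hfactor : 1 - / exp lam <= Rmin lam 1).
  { pose proof (exp_ineq1_le (- lam)). rewrite exp_Ropp in *.
    pose proof (Rinv_0_lt_compat _ HE). apply Rmin_glb; lra. }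
  rewrite Bin_minus_pois by exact Hpi. fold lam.
  rewrite Rabs_Ropp, Rabs_mult, Rabs_right
    by (apply Rle_ge, Rmult_le_pos; [apply pos_INR|apply pow2_ge_0]).
  apply Rle_trans with (INR (S n) * pi ^ 2 * c).
  { apply Rmult_le_compat_l; auto. apply Rmult_le_pos; [apply pos_INR|apply pow2_ge_0]. }
  replace (INR (S n) * pi ^ 2 * c) with ((1 - / exp lam) * pi).
  2: { unfold c. replace (INR (S n)) with (lam / pi) by (unfold lam; field; lra).
       field. lra. }
  apply Rmult_le_compat_r; lra.
Qed.

(* Given F = l with V > 0 and pV = m an integer, colour i is drawn
   Bin(m, v_i/V) times and m · v_i/V = p v_i, so the bound above applies. *)
Lemma conditional_bin_pois p j l m i :
  (0 < list_sum l)%nat -> p * INR (list_sum l) = INR m ->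
  Rabs (Bin (colour_prob l i) (ndraws p l) j - pois (p * INR (nth i l 0%nat)) j)
  <= Rmin (p * INR (nth i l 0%nat)) 1 * colour_prob l i.
Proof.
  intros Hpos Hm.
  assert (Hnd : ndraws p l = m) by (unfold ndraws; now rewrite Hm, Int_part_INR, Nat2Z.id).
  assert (HV : 0 < INR (list_sum l)) by (apply lt_0_INR; lia).
  assert (Hlam : p * INR (nth i l 0%nat) = INR m * colour_prob l i)
    by (rewrite <- Hm; unfold colour_prob; field; lra).
  rewrite Hnd, Hlam. apply bin_pois_bound, colour_prob_range.
Qed.

Section PerColour.
Variables (q : nat -> R) (K : nat) (p : R) (j : nat).
Hypothesis qpos : forall n, 0 <= q n.
Hypothesis q0 : q 0%nat = 0.
Hypothesis q1 : infinite_sum q 1.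
Hypothesis hK : (1 <= K)%nat.
Hypothesis hp : 0 <= p.
Hypothesis hint : forall l : list nat, length l = K -> Forall (fun n => 0 < q n) l ->
  exists m : nat, p * INR (list_sum l) = INR m.

Definition colour_hit (i : nat) (l : list nat) : R := Bin (colour_prob l i) (ndraws p l) j.

Definition error_term (a s : nat) : R := Rmin (p * INR a) 1 * (INR a / INR s).

Lemma colour_hit_bounded i : list_bounded (colour_hit i) 1.
Proof.
  intro l. pose proof (Bin_range _ (ndraws p l) j (colour_prob_range l i)).
  unfold colour_hit. rewrite Rabs_right; lra.
Qed.

Lemma pois_bounded i : list_bounded (fun l => pois (p * INR (nth i l 0%nat)) j) 1.
Proof.
  intro l. assert (0 <= p * INR (nth i l 0%nat)) by (apply Rmult_le_pos; [lra|apply pos_INR]).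
  pose proof (pois_range _ j H). rewrite Rabs_right; lra.
Qed.

Lemma error_term_bounded i :
  list_bounded (fun l => error_term (nth i l 0%nat) (list_sum l)) 1.
Proof.
  intro l. pose proof (colour_prob_range l i) as Hc. unfold colour_prob in Hc.
  assert (0 <= Rmin (p * INR (nth i l 0%nat)) 1 <= 1)
    by (split; [apply Rmin_glb; [apply Rmult_le_pos; [lra|apply pos_INR]|lra]|apply Rmin_r]).
  unfold error_term. rewrite Rabs_right by (apply Rle_ge, Rmult_le_pos; lra). nra.
Qed.

(* Lists in the support of the i.i.d. law have V > 0, since K ≥ 1 and q 0 = 0. *)
Lemma support_sum_pos l : in_support q K l -> (0 < list_sum l)%nat.
Proof.
  intros [Hl Hf]. destruct l as [|a r]; [simpl in Hl; lia|].
  pose proof (Forall_inv Hf) as Ha. simpl. destruct a; [rewrite q0 in Ha; lra|lia].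
Qed.

(* The Poisson term is the
   i-th marginal and the error term is moved from coordinate i to 1 by
   exchangeability. *)
Lemma colour_hit_bound i : (i < K)%nat ->
  Rabs (Eiid q K (colour_hit i) - Qj q p j) <= Eiid q K (rhs_integrand p).
Proof.
  intro Hi.
  assert (HQ : Qj q p j = Eiid q K (fun l => pois (p * INR (nth i l 0%nat)) j))
    by (symmetry; exact (Eiid_marginal q q1 (fun n => pois (p * INR n) j) K i Hi)).
  assert (HR : Eiid q K (rhs_integrand p)
               = Eiid q K (fun l => error_term (nth i l 0%nat) (list_sum l)))
    by (symmetry; exact (Eiid_exchangeable q qpos q1 error_term 1 K error_term_bounded i Hi)).
  rewrite HQ, HR.
  apply (Eiid_diff_abs q qpos q1 K _ _ _ 1 1 1);
    [apply colour_hit_bounded|apply pois_bounded|apply error_term_bounded|].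
  intros l Hl. pose proof (support_sum_pos l Hl) as Hpos.
  destruct Hl as [Hlen Hf]. destruct (hint l Hlen Hf) as [m Hm].
  exact (conditional_bin_pois p j l m i Hpos Hm).
Qed.

Lemma EW_expectation :
  Eiid q K (EW_cond p j) = ssum (fun i => Eiid q K (colour_hit i)) K.
Proof.
  rewrite (Eiid_ext q qpos K _ (fun l => ssum (fun i => colour_hit i l) K)).
  - exact (Eiid_ssum q qpos q1 K colour_hit 1 colour_hit_bounded K).
  - intros l Hl. rewrite EW_cond_binomial by now apply support_sum_pos.
    destruct Hl as [Hlen _]. now rewrite Hlen.
Qed.
End PerColour.

Theorem mainTheorem2 (q : nat -> R) (K : nat) (p : R)
  (hq : is_pos_int_law q) (hK : (1 <= K)%nat) (hp : 0 < p < 1)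
  (hint : forall l : list nat, length l = K -> Forall (fun n => 0 < q n) l ->
          exists m : nat, p * INR (list_sum l) = INR m) :
  forall j : nat,
    Rabs (Eiid q K (EW_cond p j) / INR K - Qj q p j)
      <= Eiid q K (rhs_integrand p).
Proof.
  intro j. destruct hq as [qpos [q0 q1]].
  rewrite (EW_expectation q K p j qpos q0 q1 hK).
  apply average_dev_bound; [lia|].
  intros i Hi. exact (colour_hit_bound q K p j qpos q0 q1 hK ltac:(lra) hint i Hi).
Qed.
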